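(* Let $n>k\ge 1$ be integers, not both even, with $n=Mk$ for a positive integer $M$. Let $\alpha=\lceil n/2\rceil-\lfloor (n-k)/2\rfloor$, $\beta=k-\alpha$, and $G=\sqrt{n/k}\,W_n^H\Sigma W_k$. Let $i_0\in\{1,\dots,M\}$ and let $G_k$ be the $k\times k$ submatrix of $G$ consisting of rows $i_0,i_0+M,i_0+2M,\dots,i_0+(k-1)M$. Then $\det(G_kG_k^H)=1$, and the systematic DFT frame $G_{\mathrm{sys}}=GG_k^{-1}$ is tight.
   Context: For a positive integer $l$, $W_l$ denotes the unitary $l\times l$ DFT matrix, $(W_l)_{r,s}=\frac{1}{\sqrt l}e^{-j2\pi(r-1)(s-1)/l}$, and $^H$ denotes conjugate transpose. $\Sigma$ is the $n\times k$ matrix $\begin{pmatrix} I_\alpha & 0\\ 0 & 0\\ 0 & I_\beta\end{pmatrix}$: its first $\alpha$ rows are $(I_\alpha\ 0)$, its last $\beta$ rows are $(0\ I_\beta)$, and its middle $n-k$ rows are zero. A frame with $n\times k$ analysis operator $F$ is tight if $F^HF=cI_k$ for some $c>0$. *)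

From mathcomp Require Import all_boot all_algebra.
From mathcomp Require Import reals trigo.
From mathcomp Require Export complex.

Set Implicit Arguments.
Unset Strict Implicit.
Unset Printing Implicit Defensive.

Import GRing.Theory Num.Theory.
Local Open Scope ring_scope.
Local Open Scope complex_scope.

Definition adjmx (R : realType) (m n : nat) (A : 'M[R[i]]_(m, n)) : 'M[R[i]]_(n, m) :=
  (map_mx conjc A)^T.

Definition omega (R : realType) (l : nat) : R[i] :=
  (cos (2 * pi / l%:R)) -i* (sin (2 * pi / l%:R)).

(* unitary l x l DFT matrix (0-based indices): (W_l)_{r,s} = l^{-1/2} e^{-j2pi r s / l} *)
Definition DFT (R : realType) (l : nat) : 'M[R[i]]_l :=
  \matrix_(r, s) (((Num.sqrt (l%:R : R))^-1)%:C * omega R l ^+ (r * s)%N).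

Definition alpha (n k : nat) : nat := (uphalf n - (n - k)./2)%N.
Definition beta (n k : nat) : nat := (k - alpha n k)%N.

(* Sigma: first alpha rows (I_alpha 0), last beta rows (0 I_beta), middle zero *)
Definition Sigma (R : realType) (n k : nat) : 'M[R[i]]_(n, k) :=
  \matrix_(r < n, s < k)
    if ((r < alpha n k)%N && (s == r :> nat)) then 1
    else if ((n - beta n k <= r)%N && (s == r - (n - beta n k) + alpha n k :> nat))%N
    then 1 else 0.

Definition Gmat (R : realType) (n k : nat) : 'M[R[i]]_(n, k) :=
  (Num.sqrt (n%:R / k%:R : R))%:C *: (adjmx (DFT R n) *m Sigma R n k *m DFT R k).

Lemma row_sel_proof (n M k : nat) (hn : n = (M * k)%N) (i0 : 'I_M) (t : 'I_k) :
  (i0 + t * M < n)%N.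
Proof.
rewrite hn; have Hi := ltn_ord i0; have Ht := ltn_ord t.
apply: (@leq_trans (M + t * M)); first by rewrite ltn_add2r.
have H : (t.+1 * M <= k * M)%N by rewrite leq_mul2r Ht orbT.
by move: H; rewrite mulSn [(M * k)%N]mulnC.
Qed.

(* 0-based version of row i0 + t M  (t = 0..k-1) *)
Definition row_sel (n M k : nat) (hn : n = (M * k)%N) (i0 : 'I_M) (t : 'I_k) : 'I_n :=
  Ordinal (row_sel_proof hn i0 t).

Definition Gk (R : realType) (n M k : nat) (hn : n = (M * k)%N) (i0 : 'I_M) : 'M[R[i]]_k :=
  rowsub (row_sel hn i0) (Gmat R n k).

Definition tight_frame (R : realType) (n k : nat) (F : 'M[R[i]]_(n, k)) : Prop :=
  exists c : R, 0 < c /\ adjmx F *m F = c%:C%:M.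

(* Write f s = s for s < alpha and f s = s + (n - k) otherwise, so that f s = s mod k.
   Then Sigma selects the columns f s, and G = sqrt(n/k) ((W_k)^H W_n[f, :])^H is sqrt(n/k)
   times the adjoint of a matrix with orthonormal rows: G^H G = (n/k) I.  On the rows
   i0 + t M, the identity w_n^M = w_k splits the entry w_n^(-(i0 + t M) f s) of W_n^H into
   the phase w_n^(-i0 f s) times w_k^(-t s).  Hence G_k = W_k^H D W_k with D diagonal and
   unimodular, so G_k is unitary: det (G_k G_k^H) = 1, G_k^-1 = G_k^H, and
   G_sys^H G_sys = G_k G^H G G_k^H = (n/k) I. *)

From mathcomp Require Import all_boot all_order all_algebra.
From mathcomp Require Import reals trigo complex.
From mathcomp Require Import ring lra zify.
Set Implicit Arguments.
Unset Strict Implicit.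
Unset Printing Implicit Defensive.

Import Order.TTheory GRing.Theory Num.Theory.
Local Open Scope complex_scope.
Local Open Scope ring_scope.
Local Open Scope sesquilinear_scope.

Lemma sum_unity_root_eq0 (F : fieldType) (l : nat) (z : F) :
  z ^+ l = 1 -> z != 1 -> \sum_(t < l) z ^+ t = 0.
Proof.
move=> zl1 z_neq1; apply/eqP; have := subrX1 z l.
by rewrite zl1 subrr => /esym/eqP; rewrite mulf_eq0 subr_eq0 (negbTE z_neq1).
Qed.

Section Cis.
Variable R : realType.

Lemma expr_cis (a : R) (m : nat) :
  (cos a -i* sin a) ^+ m = cos (m%:R * a) -i* sin (m%:R * a).
Proof.
elim: m => [|m IH]; first by rewrite expr0 mul0r cos0 sin0 oppr0.
rewrite exprS IH mulrSr mulrDl mul1r addrC cosD sinD /=.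
by congr Complex; ring.
Qed.

Lemma conj_cis_mul (a : R) : (cos a -i* sin a)^*%C * (cos a -i* sin a) = 1.
Proof.
have sq1 := cos2Dsin2 a; rewrite /=; congr Complex; [rewrite -sq1 |]; ring.
Qed.

Lemma cis_neq1 (x : R) : 0 < x < pi *+ 2 -> cos x -i* sin x != 1.
Proof.
move=> /andP[x_gt0 x_lt2pi]; apply/eqP => -[cos1 sin0].
have {}sin0 : sin x = 0 by rewrite -[sin x]opprK sin0 oppr0.
case: (ltrgtP x pi) => [x_ltpi | pi_ltx | x_pi].
- by have := @sin_gt0_pi _ x; rewrite x_gt0 x_ltpi sin0 ltxx => /(_ isT).
- have /sin_gt0_pi : 0 < x - pi < pi by rewrite subr_gt0 pi_ltx ltrBlDr -mulr2n.
  by rewrite -[sin _]opprK -sinDpi subrK sin0 oppr0 ltxx.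
- by move: cos1; rewrite x_pi cospi; lra.
Qed.

End Cis.

Section Omega.
Variable R : realType.

Lemma omega_exprn (l m : nat) :
  omega R l ^+ m = cos (m%:R * (2 * pi / l%:R)) -i* sin (m%:R * (2 * pi / l%:R)).
Proof. exact: expr_cis. Qed.

Lemma omega_prim_root (l : nat) : (0 < l)%N -> l.-primitive_root (omega R l).
Proof.
move=> l_gt0; apply/andP; split=> //; apply/forallP => i; rewrite unity_rootE omega_exprn.
have l_neq0 : l%:R != 0 :> R by rewrite pnatr_eq0 -lt0n.
have angleE m : m%:R * (2 * pi / l%:R) = pi *+ 2 * (m%:R / l%:R) :> R.
  by rewrite -mulr_natr; field.
case: (eqVneq i.+1 l) => [-> | i1_neq_l].
  by rewrite angleE divff // mulr1 cos2pi sin2pi oppr0 !eqxx.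
apply/eqP/negbTE/cis_neq1.
have two_pi_gt0 : 0 < pi *+ 2 :> R by rewrite pmulrn_lgt0 ?pi_gt0.
have i1_lt_l : (i.+1 < l)%N by rewrite ltn_neqAle i1_neq_l ltn_ord.
have ratio_gt0 : (0 : R) < i.+1%:R / l%:R by rewrite divr_gt0 ?ltr0n.
have ratio_lt1 : i.+1%:R / l%:R < 1 :> R.
  by rewrite ltr_pdivrMr ?ltr0n // mul1r ltr_nat.
by rewrite angleE pmulr_rgt0 // ratio_gt0 /= -[X in _ < X]mulr1 ltr_pM2l.
Qed.

Lemma omega_expr_order (l : nat) : omega R l ^+ l = 1.
Proof. by case: l => [|l]; [rewrite expr0 | apply/prim_expr_order/omega_prim_root]. Qed.

Lemma omega_mul_exprn (M k : nat) : (0 < M)%N -> omega R (M * k) ^+ M = omega R k.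
Proof.
move=> M_gt0; have M_neq0 : M%:R != 0 :> R by rewrite pnatr_eq0 -lt0n.
by rewrite omega_exprn natrM invfM mulrCA [M%:R * _]mulrA mulfV ?mul1r.
Qed.

Lemma omega_exprn_split (M k i t j : nat) : (0 < M)%N ->
  omega R (M * k) ^+ ((i + t * M) * j) =
  omega R (M * k) ^+ (i * j) * omega R k ^+ (t * (j %% k)).
Proof.
move=> M_gt0; rewrite mulnDl exprD [(t * M)%N]mulnC -mulnA (exprM _ M).
rewrite omega_mul_exprn //; congr (_ * _).
by rewrite -(expr_mod _ (omega_expr_order k)) -modnMmr expr_mod ?omega_expr_order.
Qed.

Lemma conj_omega_mul (l : nat) : (omega R l)^* * omega R l = 1.
Proof. exact: conj_cis_mul. Qed.

Lemma conj_omega (l : nat) : (omega R l)^* = (omega R l)^-1.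
Proof.
have norm1 := conj_omega_mul l.
have nz : omega R l != 0.
  by apply/eqP => w0; move: norm1; rewrite w0 mulr0 => /eqP; rewrite eq_sym oner_eq0.
by rewrite -[LHS]mulr1 -(mulfV nz) mulrA norm1 mul1r.
Qed.

End Omega.

Section ConjTranspose.
Variable C : numClosedFieldType.
Implicit Types (m n p : nat).

Lemma conjCM (x y : C) : (x * y)^* = x^* * y^*.
Proof. exact: rmorphM. Qed.

Lemma conjCX (x : C) m : (x ^+ m)^* = x^* ^+ m.
Proof. exact: rmorphXn. Qed.

Lemma trmxC_mul m n p (A : 'M[C]_(m, n)) (B : 'M[C]_(n, p)) :
  (A *m B) ^t* = B ^t* *m A ^t*.
Proof. by rewrite trmx_mul map_mxM. Qed.

Lemma trmxCZ m n (a : C) (A : 'M[C]_(m, n)) : (a *: A) ^t* = a^* *: A ^t*.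
Proof. by apply/matrixP => i j; rewrite !mxE conjCM. Qed.

Lemma rowsub_unitarymx m n p (f : 'I_p -> 'I_m) (A : 'M[C]_(m, n)) :
  injective f -> A \is unitarymx -> rowsub f A \is unitarymx.
Proof.
move=> f_inj /unitarymxP AA1; apply/unitarymxP.
have -> : (rowsub f A) ^t* = colsub f (A ^t*) by apply/matrixP => i j; rewrite !mxE.
by rewrite -mxsub_mul AA1; apply/matrixP => i j; rewrite !mxE (inj_eq f_inj).
Qed.

Lemma diag_unitarymx n (d : 'rV[C]_n) :
  (forall j, d 0 j * (d 0 j)^* = 1) -> diag_mx d \is unitarymx.
Proof.
move=> d_norm1; apply/unitarymxP/matrixP => i j; rewrite mul_diag_mx !mxE.
by case: (eqVneq i j) => [<- | _]; rewrite ?mulr1n ?d_norm1 // mulr0n conjC0 mulr0.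
Qed.

End ConjTranspose.

Lemma adjmxE (R : realType) m n (A : 'M[R[i]]_(m, n)) : adjmx A = A ^t*.
Proof. by apply/matrixP => i j; rewrite !mxE. Qed.

Lemma DFT_unitary (R : realType) (l : nat) : (0 < l)%N -> DFT R l \is unitarymx.
Proof.
move=> l_gt0; have w_prim := omega_prim_root R l_gt0.
have w_neq0 : omega R l != 0 by rewrite (prim_root_eq0 w_prim) -lt0n.
set c := ((Num.sqrt (l%:R : R))^-1)%:C.
have c_real : c^* = c := conjc_real _.
have scale_l : c * c * l%:R = 1.
  rewrite -rmorphM -(rmorph_nat (real_complex R)) -rmorphM -invfM -expr2.
  by rewrite sqr_sqrtr ?ler0n // mulVf ?pnatr_eq0 -?lt0n.
apply/unitarymxP/matrixP => r s; rewrite !mxE.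
under eq_bigr => t _ do
  rewrite !mxE -/c conjCM conjCX conj_omega c_real mulrACA !exprM -exprMn.
rewrite -mulr_sumr exprVn; case: (eqVneq r s) => [<- | r_neq_s].
  rewrite mulfV ?expf_neq0 // (eq_bigr (fun=> 1)) => [|t _]; last exact: expr1n.
  by rewrite sumr_const card_ord.
rewrite sum_unity_root_eq0 ?mulr0 //.
  rewrite exprMn exprVn -!exprM ![(_ * l)%N]mulnC !exprM omega_expr_order.
  by rewrite !expr1n invr1 mulr1.
apply: contraNneq r_neq_s => /divr1_eq/eqP.
by rewrite (eq_prim_root_expr w_prim) !modn_small // => /eqP/val_inj.
Qed.

Section SigmaColumns.
Variables (n k : nat).
Hypothesis k_le_n : (k <= n)%N.

Lemma sigma_col_subproof (s : 'I_k) :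
  ((if (s < alpha n k)%N then s : nat else s + (n - k)) < n)%N.
Proof. by have := ltn_ord s; case: ifP => _; lia. Qed.

Definition sigma_col (s : 'I_k) : 'I_n := Ordinal (sigma_col_subproof s).

Lemma sigma_col_inj : injective sigma_col.
Proof.
move=> a b /(congr1 val) /=; have := ltn_ord a; have := ltn_ord b.
by move=> ha hb; case: ifP => a_lt; case: ifP => b_lt e; apply: val_inj => /=; lia.
Qed.

Lemma alpha_le : (0 < k)%N -> (alpha n k <= k)%N.
Proof.
move=> k_gt0; rewrite /alpha uphalf_half.
have := odd_double_half n; have := odd_double_half (n - k).
by case: (odd n); case: (odd (n - k)); rewrite /= -!muln2; lia.
Qed.

Lemma Sigma_colsub (R : realType) : (0 < k)%N -> Sigma R n k = colsub sigma_col 1%:M.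
Proof.
move=> /alpha_le alpha_le_k; apply/matrixP => r s; rewrite !mxE /beta.
have -> : (r == sigma_col s) = ((r < alpha n k) && (s == r :> nat)
    || (n - (k - alpha n k) <= r) && (s == r - (n - (k - alpha n k)) + alpha n k :> nat))%N.
  rewrite -(inj_eq val_inj) /=; have := ltn_ord r; have := ltn_ord s.
  by case: ifP => s_lt hs hr; apply/idP/idP; lia.
by case: ifP => //= _; case: ifP.
Qed.

Lemma sigma_col_mod (M : nat) (s : 'I_k) : n = (M * k)%N -> (sigma_col s %% k)%N = s.
Proof.
move=> n_eq; rewrite /=; case: ifP => _; first exact: modn_small.
by rewrite n_eq -[X in (_ - X)%N]mul1n -mulnBl addnC modnMDl modn_small.
Qed.

End SigmaColumns.

Section SystematicFrame.
Variables (R : realType) (n k : nat).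
Hypotheses (k_gt0 : (0 < k)%N) (k_le_n : (k <= n)%N).

Let n_gt0 : (0 < n)%N := leq_trans k_gt0 k_le_n.

Lemma Gmat_gram : (Gmat R n k) ^t* *m Gmat R n k = (n%:R / k%:R : R)%:C%:M.
Proof.
set c := Num.sqrt (n%:R / k%:R : R).
have c_real : (c%:C)^* = c%:C := conjc_real _.
have V_unitary : (DFT R k) ^t* *m rowsub (sigma_col k_le_n) (DFT R n) \is unitarymx.
  rewrite mul_unitarymx ?trmxC_unitary ?rowsub_unitarymx ?DFT_unitary //.
  exact: sigma_col_inj.
have -> : Gmat R n k = c%:C *: (((DFT R k) ^t* *m rowsub (sigma_col k_le_n) (DFT R n)) ^t*).
  rewrite /Gmat adjmxE (Sigma_colsub k_le_n R k_gt0) mulmx_colsub mulmx1 trmxC_mul trmxCK.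
  by congr (_ *: (_ *m _)); apply/matrixP => i j; rewrite !mxE.
rewrite trmxCZ trmxCK -scalemxAl -scalemxAr scalerA (unitarymxP V_unitary).
by rewrite scale_scalar_mx mulr1 c_real -rmorphM -expr2 sqr_sqrtr // divr_ge0 ?ler0n.
Qed.

Lemma Gk_factor (M : nat) (hn : n = (M * k)%N) (i0 : 'I_M) :
  Gk R hn i0 = (DFT R k) ^t* *m
    diag_mx (\row_s (omega R n ^+ (i0 * sigma_col k_le_n s))^*) *m DFT R k.
Proof.
rewrite /Gk /Gmat adjmxE (Sigma_colsub k_le_n R k_gt0) mulmx_colsub mulmx1.
rewrite scalemxAl -mul_rowsub_mx; congr (_ *m _); apply/matrixP => t s.
have real_conj (x : R) : (x%:C)^* = x%:C := conjc_real x.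
have sqrt_scale :
    Num.sqrt (n%:R / k%:R : R) * (Num.sqrt (n%:R : R))^-1 = (Num.sqrt (k%:R : R))^-1.
  rewrite sqrtrM ?ler0n // sqrtrV ?ler0n // mulrC mulrA mulVf ?mul1r //.
  by rewrite gt_eqF // sqrtr_gt0 ltr0n.
have M_gt0 : (0 < M)%N by move: n_gt0; rewrite hn muln_gt0 => /andP[].
rewrite mul_mx_diag !mxE !conjCM !real_conj mulrA -rmorphM sqrt_scale -mulrA.
congr (_ * _).
have := sigma_col_mod k_le_n s hn; move: (nat_of_ord _) => j j_mod.
have -> : row_sel hn i0 t = (i0 + t * M)%N :> nat by [].
by rewrite hn [(j * _)%N]mulnC omega_exprn_split // j_mod conjCM mulrC mulnC.
Qed.

Lemma Gk_unitary (M : nat) (hn : n = (M * k)%N) (i0 : 'I_M) :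
  Gk R hn i0 \is unitarymx.
Proof.
rewrite Gk_factor !mul_unitarymx ?trmxC_unitary ?DFT_unitary //.
apply: diag_unitarymx => s.
by rewrite mxE conjCK conjCX -exprMn conj_omega_mul expr1n.
Qed.

End SystematicFrame.

Theorem mainTheorem5 (R : realType) (n k M : nat)
  (hkn : (1 <= k < n)%N) (hodd : ~~ (~~ odd n && ~~ odd k))
  (hn : n = (M * k)%N) (i0 : 'I_M) :
  \det (Gk R hn i0 *m adjmx (Gk R hn i0)) = 1 /\
  tight_frame (Gmat R n k *m invmx (Gk R hn i0)).
Proof.
have [k_gt0 k_lt_n] := andP hkn; have k_le_n := ltnW k_lt_n.
have Gk_unit := Gk_unitary R k_gt0 k_le_n hn i0.
rewrite /tight_frame !adjmxE (unitarymxP Gk_unit) det1; split=> //.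
exists (n%:R / k%:R); split; first by rewrite divr_gt0 ?ltr0n // (ltn_trans k_gt0).
rewrite invmx_unitary // trmxC_mul trmxCK -mulmxA (mulmxA (Gmat R n k ^t*)).
by rewrite Gmat_gram // mul_scalar_mx -scalemxAr (unitarymxP Gk_unit) scalemx1.
Qed.
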